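(* Let $\alpha\in(0,1/2)$, $p_0=P(Y=1\mid D=0)$, $p_1=P(Y=1\mid D=1)$. In the binary model, the set $\{-1,1\}$ is a valid $(1-\alpha)$ prediction set given the observed data if and only if $p_1-p_0\ge1-\alpha$ or $p_0-p_1\ge1-\alpha$; in the first case $\{1\}$, and in the second case $\{-1\}$, is also a valid $(1-\alpha)$ prediction set given the observed data.
   Context: Binary treatment/outcome model: treatment $D\in\{0,1\}$ randomized; $Y_0,Y_1\in\{0,1\}$ potential outcomes; $\mathrm{ITE}=Y_1-Y_0\in\{-1,0,1\}$. A joint distribution of $(Y_0,Y_1)$ is compatible with the observed data if $P(Y_0=1)=p_0$ and $P(Y_1=1)=p_1$. A set $S$ is a valid $(1-\alpha)$ prediction set given the observed data if $P(Y_1-Y_0\in S)\ge1-\alpha$ for every compatible joint distribution. *)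

From HB Require Import structures.
From mathcomp Require Import all_boot all_order all_algebra.
Set Implicit Arguments. Unset Strict Implicit. Unset Printing Implicit Defensive.
Import Order.TTheory GRing.Theory Num.Theory.
Local Open Scope ring_scope.

(* Potential outcomes (Y0, Y1) take values in {0,1}, encoded as bool
   (false = 0, true = 1).  A joint distribution of (Y0,Y1) is a probability
   mass function q on bool * bool, where the first component is Y0 and the
   second is Y1. *)

Definition ite (y0 y1 : bool) : int := (Posz y1 - Posz y0)%R.

Definition is_pmf (R : realFieldType) (q : bool * bool -> R) : Prop :=
  (forall y, 0 <= q y) /\ \sum_(y : bool * bool) q y = 1.

Definition compatible (R : realFieldType) (p0 p1 : R) (q : bool * bool -> R) : Prop :=
  is_pmf q /\ \sum_(y : bool * bool | y.1) q y = p0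
           /\ \sum_(y : bool * bool | y.2) q y = p1.

Definition prob_ite (R : realFieldType) (q : bool * bool -> R) (S : seq int) : R :=
  \sum_(y : bool * bool | ite y.1 y.2 \in S) q y.

Definition valid_pred_set (R : realFieldType) (alpha p0 p1 : R) (S : seq int) : Prop :=
  forall q : bool * bool -> R, compatible p0 p1 q -> 1 - alpha <= prob_ite q S.

(* Write [q_ab] for the mass of (Y0, Y1) = (a, b).  The marginal constraints
   give [q_01 - q_10 = p1 - p0], so every compatible law puts mass at least
   [p1 - p0] on ITE = 1 and at least [p0 - p1] on ITE = -1; these bounds give
   validity.  Conversely the comonotone coupling, with [q_11 = min p0 p1],
   puts mass exactly [|p1 - p0|] on ITE = ±1, so validity of {-1, 1} forces
   [1 - alpha <= |p1 - p0|]. *)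
From mathcomp Require Import all_boot all_order all_algebra.
From mathcomp Require Import ring lra.
Set Implicit Arguments.
Unset Strict Implicit.
Unset Printing Implicit Defensive.
Import Order.TTheory GRing.Theory Num.Theory.
Local Open Scope ring_scope.

Lemma big_bool_pair (V : nmodType) (F : bool * bool -> V) :
  \sum_(y : bool * bool) F y =
  F (false, false) + F (false, true) + F (true, false) + F (true, true).
Proof.
rewrite (eq_bigr (fun y => F (y.1, y.2))); last by case.
rewrite -(pair_bigA _ (fun i j => F (i, j))) /= !big_bool /=.
by rewrite addrC (addrC (F (false, true))) (addrC (F (true, true))) addrA.
Qed.

Lemma big_bool_pair_cond (V : nmodType) (P : pred (bool * bool))
    (F : bool * bool -> V) :
  \sum_(y : bool * bool | P y) F y =
  (if P (false, false) then F (false, false) else 0) +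
  (if P (false, true) then F (false, true) else 0) +
  (if P (true, false) then F (true, false) else 0) +
  (if P (true, true) then F (true, true) else 0).
Proof. by rewrite big_mkcond big_bool_pair. Qed.

Section BinaryCouplings.
Variables (R : realFieldType) (alpha p0 p1 : R).
Implicit Types q : bool * bool -> R.

Lemma compatibleE q :
  compatible p0 p1 q <->
  [/\ forall y, 0 <= q y,
      q (false, false) + q (false, true) + q (true, false) + q (true, true) = 1,
      q (true, false) + q (true, true) = p0 &
      q (false, true) + q (true, true) = p1].
Proof.
rewrite /compatible /is_pmf big_bool_pair !big_bool_pair_cond /= !add0r !addr0.
by split=> [[[? ?] [? ?]] | [? ? ? ?]].
Qed.

Lemma compatible_ite_diff q :
  compatible p0 p1 q -> q (false, true) - q (true, false) = p1 - p0.
Proof. by case/compatibleE=> _ _ <- <-; ring. Qed.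

Lemma prob_ite_pos q : prob_ite q [:: 1%Z] = q (false, true).
Proof. by rewrite /prob_ite big_bool_pair_cond /= add0r !addr0. Qed.

Lemma prob_ite_neg q : prob_ite q [:: (-1)%Z] = q (true, false).
Proof. by rewrite /prob_ite big_bool_pair_cond /= !add0r addr0. Qed.

Lemma prob_ite_nonzero q :
  prob_ite q [:: (-1)%Z; 1%Z] = q (false, true) + q (true, false).
Proof. by rewrite /prob_ite big_bool_pair_cond /= add0r addr0. Qed.

Lemma prob_ite_pos_ge q :
  compatible p0 p1 q -> p1 - p0 <= prob_ite q [:: 1%Z].
Proof.
move=> qc; rewrite prob_ite_pos -(compatible_ite_diff qc).
by case/compatibleE: qc => q_ge0 _ _ _; rewrite lerBlDr lerDl.
Qed.

Lemma prob_ite_neg_ge q :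
  compatible p0 p1 q -> p0 - p1 <= prob_ite q [:: (-1)%Z].
Proof.
move=> qc; rewrite prob_ite_neg -opprB -(compatible_ite_diff qc) opprB.
by case/compatibleE: qc => q_ge0 _ _ _; rewrite lerBlDr lerDl.
Qed.

Definition comonotone_coupling (y : bool * bool) : R :=
  match y with
  | (false, false) => 1 - Num.max p0 p1
  | (false, true) => p1 - Num.min p0 p1
  | (true, false) => p0 - Num.min p0 p1
  | (true, true) => Num.min p0 p1
  end.

Lemma comonotone_coupling_compatible :
  0 <= p0 <= 1 -> 0 <= p1 <= 1 -> compatible p0 p1 comonotone_coupling.
Proof.
move=> /andP[p0_ge0 p0_le1] /andP[p1_ge0 p1_le1].
apply/compatibleE; rewrite /comonotone_coupling.
by have [p01|p10] := leP p0 p1; split=> [[[] []]|||] /=; lra.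
Qed.

Lemma prob_ite_nonzero_comonotone :
  prob_ite comonotone_coupling [:: (-1)%Z; 1%Z] = `|p1 - p0|.
Proof.
rewrite prob_ite_nonzero /=.
have [p01|/ltW p10] := leP p0 p1.
- by rewrite ger0_norm ?subr_ge0 // subrr addr0.
- by rewrite ler0_norm ?subr_le0 // subrr add0r opprB.
Qed.

Lemma valid_pos_of_gap :
  1 - alpha <= p1 - p0 -> valid_pred_set alpha p0 p1 [:: 1%Z].
Proof. by move=> gap q /prob_ite_pos_ge; apply: le_trans. Qed.

Lemma valid_neg_of_gap :
  1 - alpha <= p0 - p1 -> valid_pred_set alpha p0 p1 [:: (-1)%Z].
Proof. by move=> gap q /prob_ite_neg_ge; apply: le_trans. Qed.

Lemma valid_nonzero_of_gap :
  1 - alpha <= `|p1 - p0| -> valid_pred_set alpha p0 p1 [:: (-1)%Z; 1%Z].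
Proof.
move=> gap q qc; rewrite prob_ite_nonzero (le_trans gap) //.
rewrite -(compatible_ite_diff qc); case/compatibleE: qc => q_ge0 _ _ _.
by rewrite -[X in _ <= X + _]ger0_norm // -[X in _ <= _ + X]ger0_norm // ler_normB.
Qed.

Lemma gap_of_valid_nonzero :
  0 <= p0 <= 1 -> 0 <= p1 <= 1 ->
  valid_pred_set alpha p0 p1 [:: (-1)%Z; 1%Z] -> 1 - alpha <= `|p1 - p0|.
Proof.
move=> p0_unit p1_unit valid; rewrite -prob_ite_nonzero_comonotone.
exact/valid/comonotone_coupling_compatible.
Qed.

End BinaryCouplings.

Theorem mainTheorem7 (R : realFieldType) (alpha p0 p1 : R)
  (halpha0 : 0 < alpha) (halpha1 : alpha < 1 / 2)
  (hp0 : 0 <= p0 <= 1) (hp1 : 0 <= p1 <= 1) :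
  (valid_pred_set alpha p0 p1 [:: (-1)%Z; 1%Z] <->
     (1 - alpha <= p1 - p0 \/ 1 - alpha <= p0 - p1))
  /\ (1 - alpha <= p1 - p0 -> valid_pred_set alpha p0 p1 [:: 1%Z])
  /\ (1 - alpha <= p0 - p1 -> valid_pred_set alpha p0 p1 [:: (-1)%Z]).
Proof.
have gapE : (1 - alpha <= `|p1 - p0|) <->
            (1 - alpha <= p1 - p0 \/ 1 - alpha <= p0 - p1).
  by rewrite ler_normr opprB; split=> /orP.
split; last by split; [exact: valid_pos_of_gap | exact: valid_neg_of_gap].
split=> [valid | /gapE]; last exact: valid_nonzero_of_gap.
exact/gapE/(gap_of_valid_nonzero hp0 hp1 valid).
Qed.
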